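(* Let $m\ge 3$ and let $T_m$ be the graph defined below. Then the eigenvalues of $T_m$ (with multiplicity) are \[ \cos\tfrac{2\pi j}{m}+\cos\tfrac{2\pi \ell}{m}\pm\sqrt{\left(\cos\tfrac{2\pi j}{m}-\cos\tfrac{2\pi \ell}{m}\right)^2+1} \] for all $(j,\ell)\in\mathbb{Z}_m\times\mathbb{Z}_m$ (both signs).
   Context: For $m\ge3$, $T_m$ is the cubic graph on $2m^2$ vertices $\{x^+_{i,j},\,x^-_{i,j}\mid i,j\in\mathbb{Z}_m\}$ with edges $\{x^+_{i,j},x^+_{i,j+1}\}$, $\{x^-_{i,j},x^-_{i,j+1}\}$ and $\{x^+_{i,j},x^-_{j,i}\}$ for all $i,j\in\mathbb{Z}_m$. (It is the vertex truncation of the standard regular embedding of $K_{m,m}$.) Eigenvalues are those of the adjacency matrix. *)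

From HB Require Import structures.
From mathcomp Require Import all_boot all_order all_algebra.
From mathcomp Require Import all_classical all_reals all_analysis.
Set Implicit Arguments. Unset Strict Implicit. Unset Printing Implicit Defensive.
Import Order.TTheory GRing.Theory Num.Theory.

(* Vertices of T_m: (true,(i,j)) = x^+_{i,j}, (false,(i,j)) = x^-_{i,j}. *)
Definition Tm_vertex (m : nat) : finType := (bool * ('I_m * 'I_m))%type.

Definition Tm_adj (m : nat) (u v : Tm_vertex m) : bool :=
  let: (b, (i, j)) := u in
  let: (b', (i', j')) := v in
  [&& b == b', i == i' &
     ((nat_of_ord j' == (j.+1 %% m)%N) || (nat_of_ord j == (j'.+1 %% m)%N))]
  || [&& b != b', nat_of_ord i == nat_of_ord j' & nat_of_ord j == nat_of_ord i'].

Definition Tm_adjmx (R : realType) (m : nat) : 'M[R]_#|Tm_vertex m| :=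
  \matrix_(p, q) ((Tm_adj (enum_val p) (enum_val q))%:R)%R.

Local Open Scope ring_scope.
Definition Tm_c (R : realType) (m k : nat) : R := cos (2 * pi * k%:R / m%:R).

Definition Tm_ev (R : realType) (m j l : nat) (sgn : bool) : R :=
  Tm_c R m j + Tm_c R m l +
  (if sgn then 1 else -1) * Num.sqrt ((Tm_c R m j - Tm_c R m l) ^+ 2 + 1).

From HB Require Import structures.
From mathcomp Require Import all_boot all_order all_algebra.
From mathcomp Require Import all_classical all_reals all_analysis.
From mathcomp Require Import complex ring lra zify.
Set Implicit Arguments.
Unset Strict Implicit.
Unset Printing Implicit Defensive.

Import Order.TTheory GRing.Theory Num.Theory.
Local Open Scope ring_scope.

(* Fourier analysis on Z_m x Z_m.  For frequencies (a, b), let e+ be the plane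
   wave x^+_{i,j} |-> w^(a i + b j) on the x^+ sheet (w = exp(2 pi i / m)) and
   e- the transposed wave x^-_{i,j} |-> w^(b i + a j) on the x^- sheet.  Then
   A e+ = 2 cos(2 pi b / m) e+ + e- and A e- = e+ + 2 cos(2 pi a / m) e-, so A
   acts on span(e+, e-) by a symmetric 2 x 2 matrix whose eigenvalues are the
   two stated values.  The resulting 2 m^2 eigenvectors have an explicit dual
   family, built from w^-1 instead of w, so they form a basis of C^(2 m^2), and
   the characteristic polynomial splits accordingly. *)

Section ComplexExponential.
Variable R : realType.
Local Open Scope complex_scope.

Definition expi (x : R) : R[i] := Complex (cos x) (sin x).

Lemma expiD x y : expi (x + y) = expi x * expi y.
Proof. by rewrite /expi cosD sinD; congr Complex; ring. Qed.

Lemma expi0 : expi 0 = 1.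
Proof. by rewrite /expi cos0 sin0. Qed.

Lemma expiMn x k : expi x ^+ k = expi (x *+ k).
Proof.
elim: k => [|k IHk]; first by rewrite expr0 mulr0n expi0.
by rewrite exprS IHk -expiD mulrS.
Qed.

Lemma expiN x : (expi x)^-1 = expi (- x).
Proof. by apply: mulr1_eq; rewrite -expiD subrr expi0. Qed.

Lemma expi_add_expiN x : expi x + expi (- x) = (cos x *+ 2)%:C.
Proof. by rewrite /expi cosN sinN; congr Complex; ring. Qed.

Lemma cos_lt1 (y : R) : 0 < y < pi *+ 2 -> cos y < 1.
Proof.
move=> /andP[y_gt0 y_lt2pi].
have sin_half_gt0 : 0 < sin (y / 2).
  by apply: sin_gt0_pi; rewrite divr_gt0 //= ltr_pdivrMr // mulr_natr.
rewrite -[y](divfK (_ : 2 != 0)) // mulr_natr cos_mulr2n cos2sin2.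
by have := exprn_gt0 2 sin_half_gt0; lra.
Qed.

Lemma expi_prim_root n : (0 < n)%N -> n.-primitive_root (expi (pi *+ 2 / n%:R)).
Proof.
move=> n_gt0; apply/andP; split=> //; apply/forallP => -[k k_lt_n] /=.
rewrite unity_rootE expiMn.
have -> : pi *+ 2 / n%:R *+ k.+1 = pi *+ 2 * (k.+1%:R / n%:R) :> R by ring.
have [->|k1_neq_n] := eqVneq k.+1 n.
  by rewrite divff ?pnatr_eq0 -?lt0n // mulr1 /expi cos2pi sin2pi eqxx.
rewrite eqbF_neg; apply/eqP => -[cos_eq1 _].
suff : cos (pi *+ 2 * (k.+1%:R / n%:R)) < 1 :> R by rewrite cos_eq1 ltxx.
have two_pi_gt0 : 0 < pi *+ 2 :> R by have := pi_gt0 R; lra.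
have k1_lt_n : (k.+1 < n)%N by rewrite ltn_neqAle k1_neq_n.
have ratio_lt1 : k.+1%:R / n%:R < 1 :> R.
  by rewrite ltr_pdivrMr ?ltr0n // mul1r ltr_nat.
by apply: cos_lt1; rewrite mulr_gt0 ?divr_gt0 ?ltr0n //= gtr_pMr.
Qed.

End ComplexExponential.

Lemma sum_expr_unity_root (F : idomainType) n (z : F) :
  z ^+ n = 1 -> \sum_(i < n) z ^+ i = (z == 1)%:R * n%:R.
Proof.
have [-> _|z_neq1 zn1] := eqVneq z 1.
  by under eq_bigr do rewrite expr1n; rewrite sumr_const card_ord mul1r.
apply/eqP; move: (subrX1 z n); rewrite zn1 subrr mul0r => /esym/eqP.
by rewrite mulf_eq0 subr_eq0 (negbTE z_neq1).
Qed.

Lemma big_pair_curry (R : Type) (idx : R) (op : Monoid.com_law idx)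
    (I J : finType) (F : I * J -> R) :
  \big[op/idx]_x F x = \big[op/idx]_i \big[op/idx]_j F (i, j).
Proof. by rewrite pair_bigA; apply: eq_bigr => -[]. Qed.

Lemma expr_ordS (R : pzSemiRingType) n (z : R) (j : 'I_n) :
  z ^+ n = 1 -> z ^+ ordS j = z ^+ j * z.
Proof. by move=> zn1; rewrite expr_mod // exprSr. Qed.

Lemma expr_ord_pred (F : fieldType) n (z : F) (j : 'I_n) :
  z ^+ n = 1 -> z ^+ ord_pred j = z ^+ j / z.
Proof.
move=> zn1; have z_neq0 : z != 0.
  have n_gt0 : (0 < n)%N := leq_ltn_trans (leq0n j) (ltn_ord j).
  apply: contra_eq_neq zn1 => ->.
  by rewrite expr0n eqn0Ngt n_gt0 eq_sym oner_neq0.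
by rewrite -{2}(ord_predK j) expr_ordS // mulfK.
Qed.

Lemma ordS_neq_ord_pred n (j : 'I_n) : (2 < n)%N -> ordS j != ord_pred j.
Proof.
move=> n_gt2; apply/eqP => /(congr1 (@ordS n)).
rewrite ord_predK => /(congr1 val) /=.
rewrite -addn1 modnDml addn1; move: (nat_of_ord j) (ltn_ord j) => k k_lt_n.
have [k2_lt_n|n_le_k2] := ltnP k.+2 n; first by rewrite modn_small //; lia.
by rewrite -(subnK n_le_k2) modnDr modn_small; lia.
Qed.

Section DualEigenbasis.
Variable F : fieldType.

Lemma char_poly_similar n (A D V : 'M[F]_n) :
  \det V != 0 -> A *m V = V *m D -> char_poly A = char_poly D.
Proof.
move=> detV_neq0 AV_VD.
have : char_poly_mx A *m map_mx polyC V = map_mx polyC V *m char_poly_mx D.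
  by rewrite mulmxBl mulmxBr -!map_mxM AV_VD scalar_mxC.
move/(congr1 determinant); rewrite !det_mulmx det_map_mx [RHS]mulrC.
by apply: mulIf; rewrite polyC_eq0.
Qed.

Variable T : finType.

Definition enum_mx (f : T -> T -> F) : 'M[F]_#|T| :=
  \matrix_(p, q) f (enum_val p) (enum_val q).

Lemma enum_mxM f g :
  enum_mx f *m enum_mx g = enum_mx (fun x z => \sum_y f x y * g y z).
Proof.
apply/matrixP => p q; rewrite !mxE.
under eq_bigr do rewrite !mxE.
by rewrite -(big_enum_val (fun y => f _ y * g y _)).
Qed.

Lemma char_poly_dual_eigenbasis (A V U : T -> T -> F) (lambda d : T -> F) :
  (forall x u, \sum_y A x y * V y u = V x u * lambda u) ->
  (forall u u', \sum_x U u x * V x u' = (u == u')%:R * d u) ->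
  (forall u, d u != 0) ->
  char_poly (enum_mx A) = \prod_u ('X - (lambda u)%:P).
Proof.
move=> AV UV d_neq0.
pose diag_of (f : T -> F) : 'M[F]_#|T| := diag_mx (\row_p f (enum_val p)).
rewrite (@char_poly_similar _ _ (diag_of lambda) (enum_mx V)).
- rewrite char_poly_trig ?diag_mx_is_trig //.
  rewrite (eq_bigr (fun p => 'X - (lambda (enum_val p))%:P)) => [|p _].
    by rewrite -(big_enum_val (fun u => 'X - (lambda u)%:P)).
  by rewrite /diag_of /diag_mx !mxE eqxx.
- have UV_d : enum_mx U *m enum_mx V = diag_of d.
    apply/matrixP => p q; rewrite enum_mxM /diag_of /diag_mx !mxE UV.
    rewrite (inj_eq enum_val_inj).
    by case: eqVneq => [->|]; rewrite ?mul1r ?mul0r.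
  have : \det (enum_mx U) * \det (enum_mx V) != 0.
    by rewrite -det_mulmx UV_d det_diag; apply/prodf_neq0 => p _; rewrite mxE.
  by rewrite mulf_eq0 negb_or => /andP[].
- by apply/matrixP => p q; rewrite enum_mxM /diag_of mul_mx_diag !mxE AV.
Qed.

End DualEigenbasis.

Section Eig2.
Variable R : rcfType.

(* The two eigenvalues of the symmetric matrix [[2x, 1], [1, 2y]]. *)
Definition eig2 (x y : R) (s : bool) : R :=
  x + y + (if s then 1 else -1) * Num.sqrt ((x - y) ^+ 2 + 1).

Let sqrt_sqr (x y : R) : Num.sqrt ((x - y) ^+ 2 + 1) ^+ 2 = (x - y) ^+ 2 + 1.
Proof. by rewrite sqr_sqrtr // addr_ge0 // sqr_ge0. Qed.

Lemma eig2_char x y s : (eig2 x y s - x *+ 2) * (eig2 x y s - y *+ 2) = 1.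
Proof.
rewrite /eig2; have := sqrt_sqr x y; set S := Num.sqrt _.
by case: s; rewrite ?mul1r ?mulN1r; nra.
Qed.

Lemma eig2_shift_mul x y :
  (eig2 x y true - y *+ 2) * (eig2 x y false - y *+ 2) = -1.
Proof.
rewrite /eig2; have := sqrt_sqr x y; set S := Num.sqrt _.
by rewrite mul1r mulN1r; nra.
Qed.

End Eig2.

Section TmAdjacency.
Variable m : nat.
Hypothesis m_gt2 : (2 < m)%N.
Local Notation V := (Tm_vertex m).

Definition Tm_next (x : V) : V := (x.1, (x.2.1, ordS x.2.2)).
Definition Tm_prev (x : V) : V := (x.1, (x.2.1, ord_pred x.2.2)).
Definition Tm_flip (x : V) : V := (~~ x.1, (x.2.2, x.2.1)).

Lemma Tm_adjE x y :
  Tm_adj x y = (y \in [:: Tm_next x; Tm_prev x; Tm_flip x]).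
Proof.
case: x y => b [i j] [b' [i' j']].
have succ_eq : (nat_of_ord j' == j.+1 %% m)%N = (j' == ordS j) by [].
have pred_eq : (nat_of_ord j == j'.+1 %% m)%N = (j' == ord_pred j).
  by rewrite [in RHS]eq_sym (can2_eq (@ord_predK m) (@ordSK m)).
rewrite /Tm_adj succ_eq pred_eq !inE /Tm_next /Tm_prev /Tm_flip /= !xpair_eqE.
case: b b' => -[] /=; rewrite ?andbF ?orbF.
- by rewrite -andb_orr (eq_sym i).
- by rewrite andbC; congr andb; apply: eq_sym.
- by rewrite andbC; congr andb; apply: eq_sym.
- by rewrite -andb_orr (eq_sym i).
Qed.

Lemma uniq_Tm_neighbours x : uniq [:: Tm_next x; Tm_prev x; Tm_flip x].
Proof.
rewrite /= !inE /Tm_next /Tm_prev /Tm_flip !xpair_eqE.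
by rewrite (negbTE (ordS_neq_ord_pred x.2.2 m_gt2)) andbF; case: (x.1).
Qed.

Lemma sum_Tm_adj (R : pzSemiRingType) x (f : V -> R) :
  \sum_y (Tm_adj x y)%:R * f y = f (Tm_next x) + f (Tm_prev x) + f (Tm_flip x).
Proof.
under eq_bigr do rewrite mulr_natl mulrb.
rewrite -big_mkcond (eq_bigl (mem [:: Tm_next x; Tm_prev x; Tm_flip x])) => [|y].
  by rewrite -big_uniq ?uniq_Tm_neighbours // !big_cons big_nil /= addr0 addrA.
exact: Tm_adjE.
Qed.

End TmAdjacency.

Section TmEigenbasis.
Variables (R : realType) (m : nat).
Hypothesis m_gt2 : (2 < m)%N.
Local Notation C := R[i].
Local Notation V := (Tm_vertex m).
Local Notation omega := (expi (pi *+ 2 / m%:R) : C).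
Local Open Scope complex_scope.

Let omega_prim : m.-primitive_root omega := expi_prim_root R (ltnW (ltnW m_gt2)).

Let omegaX_m k : (omega ^+ k) ^+ m = 1.
Proof. by rewrite exprAC (prim_expr_order omega_prim) expr1n. Qed.

Lemma omegaX_addV k : omega ^+ k + (omega ^+ k)^-1 = (Tm_c R m k *+ 2)%:C.
Proof.
by rewrite expiMn expiN expi_add_expiN /Tm_c; congr ((cos _ *+ 2)%:C); ring.
Qed.

Definition Tm_lambda (u : V) : R := eig2 (Tm_c R m u.2.1) (Tm_c R m u.2.2) u.1.
Definition Tm_beta (u : V) : R := Tm_lambda u - Tm_c R m u.2.2 *+ 2.

Lemma Tm_lambda_beta u :
  Tm_lambda u * Tm_beta u = Tm_c R m u.2.1 *+ 2 * Tm_beta u + 1.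
Proof.
rewrite -(eig2_char (Tm_c R m u.2.1) (Tm_c R m u.2.2) u.1).
by rewrite /Tm_beta /Tm_lambda; ring.
Qed.

(* Column [u] of the eigenbasis is [Tm_vec (fun a => omega ^+ a) ^~ u]; the
   choice [z a = omega ^- a] gives the dual family. *)
Definition Tm_vec (z : 'I_m -> C) (x u : V) : C :=
  if x.1 then z u.2.1 ^+ x.2.1 * z u.2.2 ^+ x.2.2
  else (Tm_beta u)%:C * (z u.2.2 ^+ x.2.1 * z u.2.1 ^+ x.2.2).

Lemma Tm_vec_eigen x u :
  \sum_y (Tm_adj x y)%:R * Tm_vec (fun a => omega ^+ a) y u =
  Tm_vec (fun a => omega ^+ a) x u * (Tm_lambda u)%:C.
Proof.
rewrite sum_Tm_adj //; case: x => -[] [i j].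
all: rewrite /Tm_vec /Tm_next /Tm_prev /Tm_flip /= expr_ordS ?expr_ord_pred //.
all: set za := omega ^+ u.2.1; set zb := omega ^+ u.2.2.
- have -> : (Tm_lambda u)%:C = zb + zb^-1 + (Tm_beta u)%:C.
    by rewrite omegaX_addV -rmorphD /Tm_beta addrC subrK.
  by set wb := zb^-1; ring.
- have : (Tm_lambda u)%:C * (Tm_beta u)%:C = (za + za^-1) * (Tm_beta u)%:C + 1.
    by rewrite omegaX_addV -!rmorphM -rmorphD Tm_lambda_beta.
  set wa := za^-1; set B := (Tm_beta u)%:C; set L := (Tm_lambda u)%:C => LB.
  by rewrite [RHS]mulrAC [_ * L]mulrC LB; ring.
Qed.

Lemma sum_omega_ratioX (a a' : 'I_m) :
  \sum_(i < m) (omega ^+ a' / omega ^+ a) ^+ i = (a == a')%:R * m%:R.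
Proof.
have omegaX_neq0 k : omega ^+ k != 0.
  by rewrite expf_neq0 // (prim_root_eq0 omega_prim) -lt0n (ltnW (ltnW m_gt2)).
rewrite sum_expr_unity_root; last by rewrite exprMn exprVn !omegaX_m invr1 mulr1.
rewrite -(inj_eq (mulIf (omegaX_neq0 a))) divfK // mul1r.
by rewrite (eq_prim_root_expr omega_prim) !modn_small // eq_sym.
Qed.

Lemma Tm_vec_pairing u u' :
  \sum_x Tm_vec (fun a => (omega ^+ a)^-1) x u *
          Tm_vec (fun a => omega ^+ a) x u' =
  ((u.2.1 == u'.2.1) && (u.2.2 == u'.2.2))%:R * m%:R ^+ 2 *
  (1 + (Tm_beta u * Tm_beta u')%:C).
Proof.
case: u u' => s [a b] [s' [a' b']] /=.
pose q (c c' : 'I_m) := omega ^+ c' / omega ^+ c.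
have qX (c c' : 'I_m) i :
    ((omega ^+ c)^-1) ^+ i * (omega ^+ c') ^+ i = q c c' ^+ i.
  by rewrite /q exprMn exprVn mulrC.
transitivity ((\sum_(i < m) q a a' ^+ i) * (\sum_(j < m) q b b' ^+ j) *
    (1 + (Tm_beta (s, (a, b)) * Tm_beta (s', (a', b')))%:C)).
  rewrite big_pair_curry big_bool /= !big_pair_curry mulrDr mulr1 rmorphM /=.
  congr (_ + _).
    rewrite big_distrlr; apply: eq_bigr => i _; apply: eq_bigr => j _ /=.
    by rewrite -!qX /Tm_vec /=; ring.
  rewrite [(\sum_(i < m) _) * _ in RHS]mulrC big_distrlr big_distrl.
  apply: eq_bigr => i _.
  rewrite big_distrl; apply: eq_bigr => j _ /=.
  by rewrite -!qX /Tm_vec /=; ring.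
rewrite !sum_omega_ratioX.
by case: (a == a'); case: (b == b'); rewrite /=; ring.
Qed.

Lemma Tm_beta_mulTF (a b : 'I_m) :
  Tm_beta (true, (a, b)) * Tm_beta (false, (a, b)) = -1.
Proof. exact: eig2_shift_mul. Qed.

Lemma Tm_vec_dual u u' :
  \sum_x Tm_vec (fun a => (omega ^+ a)^-1) x u *
          Tm_vec (fun a => omega ^+ a) x u' =
  (u == u')%:R * (m%:R ^+ 2 * (1 + Tm_beta u ^+ 2))%:C.
Proof.
rewrite Tm_vec_pairing; case: u u' => s [a b] [s' [a' b']] /=.
rewrite !xpair_eqE [(s == s') && _]andbC.
have [/andP[/eqP <- /eqP <-]|_] := boolP ((a == a') && (b == b'));
  last by rewrite !mul0r.
rewrite /= mul1r; case: s s' => -[] /=.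
- move: (Tm_beta _) => x.
  by rewrite mul1r expr2 [RHS]rmorphM rmorphXn rmorph_nat rmorphD rmorph1.
- by rewrite [X in X%:C]Tm_beta_mulTF rmorphN rmorph1 subrr mulr0 mul0r.
- rewrite [X in X%:C]mulrC [X in X%:C]Tm_beta_mulTF.
  by rewrite rmorphN rmorph1 subrr mulr0 mul0r.
- move: (Tm_beta _) => x.
  by rewrite mul1r expr2 [RHS]rmorphM rmorphXn rmorph_nat rmorphD rmorph1.
Qed.

Lemma Tm_dual_norm_neq0 u : (m%:R ^+ 2 * (1 + Tm_beta u ^+ 2))%:C != 0 :> C.
Proof.
rewrite fmorph_eq0 mulf_neq0 ?expf_neq0 ?pnatr_eq0 -?lt0n ?(ltnW (ltnW m_gt2)) //.
by rewrite gt_eqF // ltr_pwDl ?sqr_ge0.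
Qed.

Lemma char_poly_Tm_complex :
  char_poly (enum_mx (fun x y : V => (Tm_adj x y)%:R : C)) =
  \prod_u ('X - ((Tm_lambda u)%:C)%:P).
Proof.
apply: (char_poly_dual_eigenbasis (V := Tm_vec (fun a => omega ^+ a))
         (U := fun u x => Tm_vec (fun a => (omega ^+ a)^-1) x u)).
- exact: Tm_vec_eigen.
- exact: Tm_vec_dual.
- exact: Tm_dual_norm_neq0.
Qed.

End TmEigenbasis.

Theorem theorem6p9 (R : realType) (m : nat) (hm : (3 <= m)%N) :
  char_poly (Tm_adjmx R m) =
  \prod_(j < m) \prod_(l < m) \prod_(s : bool) ('X - (Tm_ev R m j l s)%:P).
Proof.
have -> : \prod_(j < m) \prod_(l < m) \prod_(s : bool) ('X - (Tm_ev R m j l s)%:P) =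
    \prod_(u : Tm_vertex m) ('X - (@Tm_lambda R m u)%:P).
  by rewrite [RHS]big_pair_curry [RHS]exchange_big [RHS]big_pair_curry.
apply: (map_poly_inj (real_complex R)); rewrite map_char_poly map_prod_XsubC.
rewrite -(@char_poly_Tm_complex R m hm); congr char_poly.
by apply/matrixP => p q; rewrite !mxE rmorph_nat.
Qed.
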